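(* Suppose $\Re s=1$, $u\ge1$, and $|s|>u$. For integers $\nu\ge0$, \[ \left|\frac{\partial^{\nu}}{\partial u^{\nu}}\left(s\frac{\partial}{\partial s}G(u,s)\right)\right|\ll_{\nu}\frac{|s|^{\nu}}{u^{2\nu}}, \] with implied constant depending only on $\nu$.
   Context: $G(u,s):=\int_{0}^{1/u}\frac{1-e^{-ts}}{t}\,dt$. *)

From Stdlib Require Import Reals ClassicalEpsilon.
From Coquelicot Require Import Coquelicot.
Open Scope R_scope.

Definition Cexp (z : C) : C :=
  (exp (Re z) * cos (Im z), exp (Re z) * sin (Im z)).

(* G(u,s) = int_0^{1/u} (1 - e^{-ts})/t dt  (complex-valued Riemann integral;
   the integrand is bounded near t = 0, its value at the single point t = 0
   is irrelevant) *)
Definition G (u : R) (s : C) : C :=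
  RInt (V := C_R_CompleteNormedModule)
       (fun t : R => ((1 - Cexp (- (RtoC t * s))) / RtoC t)%C) 0 (1 / u).

Definition CDerive (f : C -> C) (z : C) : C :=
  epsilon (inhabits (RtoC 0)) (fun l : C => is_derive (K := C_AbsRing) (V := C_NormedModule) f z l).

Fixpoint DerC (n : nat) (f : R -> C) : R -> C :=
  match n with
  | O => f
  | S m => fun x => (Derive (fun y => Re (DerC m f y)) x,
                      Derive (fun y => Im (DerC m f y)) x)
  end.

Definition sdG (u : R) (s : C) : C := (s * CDerive (fun z => G u z) s)%C.

From Stdlib Require Import Reals Lra Lia List ClassicalEpsilon.
From Coquelicot Require Import Coquelicot.
Open Scope R_scope.

(* Differentiating under the integral sign, the s-derivative of the integrand
   (1 - e^{-ts})/t is e^{-ts}, so s dG/ds (u, s) = 1 - e^{-s/u}.  Differentiating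
   e^{-s/u} P(s, 1/u) in u gives a function of the same shape, and by induction
   the nu-th derivative is e^{-s/u} times a combination of monomials
   s^k u^{-(nu+k)} with k <= nu.  For |s| >= u each such monomial is at most
   |s|^nu u^{-2nu}, while |e^{-s/u}| <= 1 because Re s >= 0. *)

(** * The complex exponential *)

Lemma Cexp_add a b : Cexp (a + b) = (Cexp a * Cexp b)%C.
Proof.
destruct a as [x1 y1], b as [x2 y2]; unfold Cexp, Cplus, Cmult; simpl.
rewrite exp_plus, cos_plus, sin_plus; f_equal; ring.
Qed.

Lemma Cexp_0 : Cexp 0 = 1%C.
Proof. unfold Cexp, RtoC; simpl; rewrite exp_0, cos_0, sin_0; f_equal; ring. Qed.

Lemma Cmod_Cexp w : Cmod (Cexp w) = exp (Re w).
Proof.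
destruct w as [x y]; unfold Cmod, Cexp; cbn [fst snd Re Im].
replace ((exp x * cos y) ^ 2 + (exp x * sin y) ^ 2) with (exp x ^ 2).
- apply sqrt_pow2; left; apply exp_pos.
- pose proof (sin2_cos2 y) as E; unfold Rsqr in E; nra.
Qed.

Lemma Cmod_Cexp_le_1 w : Re w <= 0 -> Cmod (Cexp w) <= 1.
Proof.
intros Hw; rewrite Cmod_Cexp, <- exp_0.
destruct Hw as [Hw | ->]; [left; apply exp_increasing, Hw | right; reflexivity].
Qed.

Lemma Rabs_Im_le_Cmod z : Rabs (Im z) <= Cmod z.
Proof.
destruct z as [a b]; unfold Cmod; cbn [fst snd Im].
rewrite <- sqrt_Rsqr_abs; apply sqrt_le_1_alt; unfold Rsqr; nra.
Qed.

Lemma Cmod_le_Rabs_Re_Im z : Cmod z <= Rabs (Re z) + Rabs (Im z).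
Proof.
destruct z as [a b]; unfold Cmod; cbn [fst snd Re Im].
pose proof (Rabs_pos a); pose proof (Rabs_pos b).
rewrite <- (sqrt_pow2 (Rabs a + Rabs b)) by lra.
apply sqrt_le_1_alt; rewrite <- (pow2_abs a), <- (pow2_abs b); nra.
Qed.

Lemma exp_sub_1_sub_bounds x : Rabs x <= 1/2 -> 0 <= exp x - 1 - x <= 2 * x ^ 2.
Proof.
intros Hx; apply Rabs_le_between in Hx.
pose proof (exp_ineq1_le x); pose proof (exp_ineq1_le (- x)); pose proof (exp_pos x).
assert (exp x * exp (- x) = 1) by (rewrite <- exp_plus, Rplus_opp_r; apply exp_0).
split; nra.
Qed.

Lemma Rabs_exp_sub_1_le x : Rabs x <= 1/2 -> Rabs (exp x - 1) <= 2 * Rabs x.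
Proof.
intros Hx; destruct (exp_sub_1_sub_bounds x Hx); apply Rabs_le_between in Hx.
apply Rabs_le_between; destruct (Rle_dec 0 x);
  [rewrite Rabs_right by lra | rewrite Rabs_left by lra]; nra.
Qed.

Lemma Rabs_sin_sub_le y : Rabs y <= 1 -> Rabs (sin y - y) <= y ^ 2.
Proof.
assert (Hs : forall a, 0 <= a <= 1 -> Rabs (sin a - a) <= a ^ 2).
{ intros a Ha; pose proof PI2_1.
  destruct (sin_bound a 0 ltac:(lra) ltac:(lra)) as [Hlow _].
  replace (sin_approx a (2 * 0 + 1)) with (a - a ^ 3 / 6) in Hlow
    by (unfold sin_approx, sin_term; simpl; field).
  assert (sin a <= a).
  { destruct (Req_dec a 0) as [-> | Ha0]; [rewrite sin_0; lra | left; apply sin_lt_x; lra]. }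
  apply Rabs_le_between; split; nra. }
intros Hy; destruct (Rle_dec 0 y).
- apply Hs; apply Rabs_le_between in Hy; lra.
- replace (sin y - y) with (- (sin (- y) - - y)) by (rewrite sin_neg; ring).
  rewrite Rabs_Ropp; replace (y ^ 2) with ((- y) ^ 2) by ring.
  apply Hs; apply Rabs_le_between in Hy; lra.
Qed.

Lemma Rabs_sin_le y : Rabs (sin y) <= Rabs y.
Proof.
assert (H : forall a, 0 <= a -> Rabs (sin a) <= a).
{ intros a Ha; pose proof PI2_1; pose proof (SIN_bound a).
  destruct (Rle_dec a 1) as [Ha1 | Ha1]; [| apply Rabs_le_between; lra].
  destruct Ha as [Ha | <-]; [| rewrite sin_0, Rabs_R0; lra].
  pose proof (sin_ge_0 a ltac:(lra) ltac:(lra)); pose proof (sin_lt_x a Ha).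
  rewrite Rabs_right; lra. }
destruct (Rle_dec 0 y).
- rewrite (Rabs_right y) by lra; apply H; lra.
- rewrite (Rabs_left y), <- (Rabs_Ropp (sin y)), <- sin_neg by lra; apply H; lra.
Qed.

Lemma Rabs_cos_sub_1_le y : Rabs y <= 1 -> Rabs (cos y - 1) <= y ^ 2 / 2.
Proof.
intros Hy; apply Rabs_le_between in Hy; pose proof PI2_1.
destruct (cos_bound y 0 ltac:(lra) ltac:(lra)) as [Hlow _].
replace (cos_approx y (2 * 0 + 1)) with (1 - y ^ 2 / 2) in Hlow
  by (unfold cos_approx, cos_term; simpl; field).
pose proof (COS_bound y); apply Rabs_le_between; nra.
Qed.

Lemma Cmod_Cexp_sub_1_sub_le w :
  Cmod w <= 1/2 -> Cmod (Cexp w - 1 - w) <= 3 * Cmod w ^ 2.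
Proof.
destruct w as [x y]; intros Hw.
assert (Hx : Rabs x <= 1/2) by (pose proof (re_le_Cmod (x, y)); simpl in *; lra).
assert (Hy : Rabs y <= 1) by (pose proof (Rabs_Im_le_Cmod (x, y)); simpl in *; lra).
assert (Hmod : Cmod (x, y) ^ 2 = x ^ 2 + y ^ 2)
  by (unfold Cmod; cbn [fst snd]; rewrite pow2_sqrt; nra).
rewrite Hmod; eapply Rle_trans; [apply Cmod_le_Rabs_Re_Im |].
unfold Cexp; cbn [Re Im fst snd Cminus Cplus Copp RtoC].
destruct (exp_sub_1_sub_bounds x Hx) as [E0 E2]; pose proof (exp_pos x).
assert (Hre : Rabs (exp x * cos y + - (1) + - x) <= 2 * x ^ 2 + y ^ 2).
{ replace (exp x * cos y + - (1) + - x) with (exp x * (cos y - 1) + (exp x - 1 - x)) by ring.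
  eapply Rle_trans; [apply Rabs_triang |].
  rewrite Rabs_mult, (Rabs_right (exp x)), (Rabs_right (exp x - 1 - x)) by lra.
  pose proof (Rabs_cos_sub_1_le y Hy); pose proof (Rabs_pos (cos y - 1)).
  apply Rabs_le_between in Hx; assert (exp x <= 2) by nra; nra. }
assert (Him : Rabs (exp x * sin y + - (0) + - y) <= x ^ 2 + 2 * y ^ 2).
{ replace (exp x * sin y + - (0) + - y) with ((exp x - 1) * sin y + (sin y - y)) by ring.
  eapply Rle_trans; [apply Rabs_triang |]; rewrite Rabs_mult.
  assert (Rabs (exp x - 1) * Rabs (sin y) <= 2 * Rabs x * Rabs y)
    by (apply Rmult_le_compat; auto using Rabs_pos, Rabs_exp_sub_1_le, Rabs_sin_le).
  pose proof (Rabs_sin_sub_le y Hy).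
  rewrite <- (pow2_abs x), <- (pow2_abs y) in *.
  pose proof (pow2_ge_0 (Rabs x - Rabs y)); nra. }
lra.
Qed.

(** * Complex derivatives *)

Definition is_C_derive (f : C -> C) (z l : C) : Prop :=
  is_derive (K := C_AbsRing) (V := C_NormedModule) f z l.

(* [C_NormedModule] and [AbsRing_NormedModule C_AbsRing] have different uniform
   structures, so [is_derive] over them is not convertible; Coquelicot's product
   and chain rules are stated over the latter. *)
Lemma is_C_derive_ring_iff f z l :
  is_C_derive f z l <-> is_derive (K := C_AbsRing) (V := AbsRing_NormedModule C_AbsRing) f z l.
Proof.
split; intros [_ H]; (split; [apply is_linear_scal_l | intros x Hx eps; exact (H x Hx eps)]).
Qed.

Lemma is_C_derive_of_quadratic_remainder f z0 l d M : 0 < d -> 0 <= M ->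
  (forall z, Cmod (z - z0) < d -> Cmod (f z - f z0 - (z - z0) * l) <= M * Cmod (z - z0) ^ 2) ->
  is_C_derive f z0 l.
Proof.
intros Hd HM Hrem; split; [apply is_linear_scal_l |].
intros x Hx; apply (is_filter_lim_locally_unique (K := C_AbsRing)
  (V := AbsRing_NormedModule C_AbsRing)) in Hx; subst x.
intros eps; apply (locally_norm_le_locally (K := C_AbsRing) (V := AbsRing_NormedModule C_AbsRing)).
pose proof (cond_pos eps).
assert (Hr : 0 < Rmin d (eps / (M + 1))) by (apply Rmin_pos; [| apply Rdiv_lt_0_compat]; lra).
exists (mkposreal _ Hr); intros z Hz.
change (Cmod (z - z0) < Rmin d (eps / (M + 1))) in Hz.
change (Cmod (f z - f z0 - (z - z0) * l) <= eps * Cmod (z - z0)).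
pose proof (Rmin_l d (eps / (M + 1))); pose proof (Rmin_r d (eps / (M + 1))).
pose proof (Cmod_ge_0 (z - z0)).
assert (M * Cmod (z - z0) <= eps).
{ apply Rle_trans with (M * (eps / (M + 1))); [apply Rmult_le_compat_l; lra |].
  apply (Rmult_le_reg_r (M + 1)); [lra |]; field_simplify; nra. }
eapply Rle_trans; [apply Hrem; lra | nra].
Qed.

Lemma is_C_derive_ext f g z l l' :
  (forall w, f w = g w) -> l = l' -> is_C_derive f z l -> is_C_derive g z l'.
Proof. intros Hfg <-; apply is_derive_ext, Hfg. Qed.

Lemma is_C_derive_const (c z : C) : is_C_derive (fun _ => c) z 0.
Proof. exact (is_derive_const (K := C_AbsRing) (V := C_NormedModule) c z). Qed.

Lemma is_C_derive_id z : is_C_derive (fun w => w) z 1.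
Proof. apply is_C_derive_ring_iff; exact (is_derive_id (K := C_AbsRing) z). Qed.

Lemma is_C_derive_plus f g z df dg : is_C_derive f z df -> is_C_derive g z dg ->
  is_C_derive (fun w => f w + g w)%C z (df + dg)%C.
Proof. exact (is_derive_plus (K := C_AbsRing) (V := C_NormedModule) f g z df dg). Qed.

Lemma is_C_derive_minus f g z df dg : is_C_derive f z df -> is_C_derive g z dg ->
  is_C_derive (fun w => f w - g w)%C z (df - dg)%C.
Proof. exact (is_derive_minus (K := C_AbsRing) (V := C_NormedModule) f g z df dg). Qed.

Lemma is_C_derive_opp f z df : is_C_derive f z df -> is_C_derive (fun w => - f w)%C z (- df)%C.
Proof. exact (is_derive_opp (K := C_AbsRing) (V := C_NormedModule) f z df). Qed.

Lemma is_C_derive_mult f g z df dg : is_C_derive f z df -> is_C_derive g z dg ->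
  is_C_derive (fun w => f w * g w)%C z (df * g z + f z * dg)%C.
Proof.
rewrite !is_C_derive_ring_iff; intros Hf Hg.
exact (is_derive_mult f g z df dg Hf Hg Cmult_comm).
Qed.

Lemma is_C_derive_comp f g z df dg : is_C_derive f (g z) df -> is_C_derive g z dg ->
  is_C_derive (fun w => f (g w)) z (dg * df)%C.
Proof.
intros Hf Hg; apply is_C_derive_ring_iff in Hg.
exact (is_derive_comp f g z df dg Hf Hg).
Qed.

Lemma is_C_derive_Cexp z : is_C_derive Cexp z (Cexp z).
Proof.
apply (is_C_derive_of_quadratic_remainder _ _ _ (1/2) (3 * Cmod (Cexp z)));
  [lra | pose proof (Cmod_ge_0 (Cexp z)); lra |].
intros w Hw.
replace (Cexp w - Cexp z - (w - z) * Cexp z)%C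
  with (Cexp z * (Cexp (w - z) - 1 - (w - z)))%C.
2: { replace (Cexp w) with (Cexp (z + (w - z))) by (f_equal; ring); rewrite Cexp_add; ring. }
rewrite Cmod_mult.
replace (3 * Cmod (Cexp z) * Cmod (w - z) ^ 2)
  with (Cmod (Cexp z) * (3 * Cmod (w - z) ^ 2)) by ring.
apply Rmult_le_compat_l; [apply Cmod_ge_0 |].
apply Cmod_Cexp_sub_1_sub_le; lra.
Qed.

Lemma is_C_derive_Cinv (z : C) : z <> 0%C -> is_C_derive Cinv z (- / (z * z))%C.
Proof.
intros Hz; assert (Hm : 0 < Cmod z) by (apply Cmod_gt_0; exact Hz).
apply (is_C_derive_of_quadratic_remainder _ _ _ (Cmod z / 2) (2 / Cmod z ^ 3));
  [lra | apply Rlt_le, Rdiv_lt_0_compat; [lra | apply pow_lt; lra] |].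
intros w Hw.
assert (Hwz : Cmod z / 2 <= Cmod w).
{ pose proof (Cmod_triangle w (z - w)); rewrite <- Cmod_opp in Hw.
  replace (- (w - z))%C with (z - w)%C in Hw by ring.
  replace (w + (z - w))%C with z in * by ring; lra. }
assert (Hw0 : w <> 0%C) by (intros ->; rewrite Cmod_0 in Hwz; lra).
replace (Cinv w - Cinv z - (w - z) * - / (z * z))%C with ((w - z) * (w - z) / (w * (z * z)))%C
  by (field; auto).
rewrite Cmod_div by (repeat apply Cmult_neq_0; auto).
rewrite !Cmod_mult.
assert (Hw1 : 0 < Cmod w) by lra.
replace (Cmod (w - z) * Cmod (w - z) / (Cmod w * (Cmod z * Cmod z)))
  with (Cmod (w - z) ^ 2 * (/ Cmod z * / Cmod z) * / Cmod w) by (field; lra).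
replace (2 / Cmod z ^ 3 * Cmod (w - z) ^ 2)
  with (Cmod (w - z) ^ 2 * (/ Cmod z * / Cmod z) * / (Cmod z / 2)) by (field; lra).
apply Rmult_le_compat_l.
- pose proof (Rinv_0_lt_compat _ Hm); pose proof (pow2_ge_0 (Cmod (w - z))); nra.
- apply Rinv_le_contravar; lra.
Qed.

Lemma is_derive_comp_RtoC (phi : C -> C) x l : is_C_derive phi (RtoC x) l ->
  is_derive (K := R_AbsRing) (V := C_R_NormedModule) (fun t => phi (RtoC t)) x l.
Proof.
intros [_ Hphi]; split; [apply is_linear_scal_l |].
intros y Hy; apply (is_filter_lim_locally_unique (K := R_AbsRing)
  (V := AbsRing_NormedModule R_AbsRing)) in Hy; subst y.
intros eps; specialize (Hphi (RtoC x) (fun P HP => HP) eps).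
apply (locally_le_locally_norm (K := C_AbsRing) (V := AbsRing_NormedModule C_AbsRing)) in Hphi.
destruct Hphi as [d Hd].
apply (locally_norm_le_locally (K := R_AbsRing) (V := AbsRing_NormedModule R_AbsRing)).
exists d; intros t Ht; specialize (Hd (RtoC t)).
change (Cmod (RtoC t - RtoC x)%C < d -> Cmod (phi t - phi x - (RtoC t - RtoC x) * l)%C
  <= eps * Cmod (RtoC t - RtoC x)%C) in Hd.
change (Rabs (t - x) < d) in Ht.
rewrite <- !Cmod_norm, scal_R_Cmult.
change (Cmod (phi t - phi x - RtoC (t - x) * l)%C <= eps * Rabs (t - x)).
assert (Hdist : (RtoC t - RtoC x)%C = RtoC (t - x))
  by (unfold RtoC, Cminus, Cplus, Copp; simpl; f_equal; ring).
rewrite Hdist, Cmod_R in Hd; apply Hd, Ht.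
Qed.

Lemma is_derive_Re (g : R -> C) x l :
  is_derive (K := R_AbsRing) (V := C_R_NormedModule) g x l ->
  is_derive (fun t => Re (g t)) x (Re l).
Proof.
intros H; exact (filterdiff_comp' g (fun c : C_R_NormedModule => fst c) x _ _ H
  (filterdiff_linear _ is_linear_fst)).
Qed.

Lemma is_derive_Im (g : R -> C) x l :
  is_derive (K := R_AbsRing) (V := C_R_NormedModule) g x l ->
  is_derive (fun t => Im (g t)) x (Im l).
Proof.
intros H; exact (filterdiff_comp' g (fun c : C_R_NormedModule => snd c) x _ _ H
  (filterdiff_linear _ is_linear_snd)).
Qed.

Lemma DerC_S_eq n (f : R -> C) (psi : C -> C) y l : 0 < y ->
  (forall x, 0 < x -> DerC n f x = psi (RtoC x)) -> is_C_derive psi (RtoC y) l ->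
  DerC (S n) f y = l.
Proof.
intros Hy Hf Hpsi; pose proof (is_derive_comp_RtoC _ _ _ Hpsi) as Hr.
assert (Hpos : locally y (fun t => 0 < t)).
{ apply (locally_interval _ y (Finite 0) p_infty); simpl; auto. }
simpl.
rewrite (Derive_ext_loc _ (fun t => Re (psi (RtoC t)))),
  (Derive_ext_loc (fun t => Im (DerC n f t)) (fun t => Im (psi (RtoC t)))).
- transitivity (Re l, Im l); [| destruct l; reflexivity].
  f_equal; apply is_derive_unique; [apply is_derive_Re | apply is_derive_Im]; exact Hr.
- eapply filter_imp; [| exact Hpos]; intros t Ht; simpl; rewrite Hf; auto.
- eapply filter_imp; [| exact Hpos]; intros t Ht; simpl; rewrite Hf; auto.
Qed.

Lemma CDerive_unique f z l : is_C_derive f z l -> CDerive f z = l.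
Proof.
intros H; unfold CDerive.
pose proof (epsilon_spec (inhabits (RtoC 0))
  (fun l => is_derive (K := C_AbsRing) (V := C_NormedModule) f z l) (ex_intro _ l H)) as Hspec.
rewrite <- (is_C_derive_unique _ _ _ Hspec); exact (is_C_derive_unique _ _ _ H).
Qed.

(** * Differentiating [G] in [s] *)

Lemma is_C_derive_Cexp_scale (c z : C) :
  is_C_derive (fun w => Cexp (- (w * c)))%C z (- c * Cexp (- (z * c)))%C.
Proof.
apply (is_C_derive_comp Cexp (fun w => - (w * c))%C); [apply is_C_derive_Cexp |].
refine (is_C_derive_ext _ _ _ _ _ _ _
  (is_C_derive_mult (fun _ => - c)%C (fun w => w) z _ _
    (is_C_derive_const _ _) (is_C_derive_id _)));
  [intros w | ]; simpl; ring.
Qed.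

Lemma continuous_of_linear_bound (g : R -> C) x d M : 0 < d ->
  (forall t, Rabs (t - x) < d -> Cmod (g t - g x) <= M * Rabs (t - x)) ->
  continuous (T := R_UniformSpace) (U := C_R_CompleteNormedModule) g x.
Proof.
intros Hd Hg.
apply (proj2 (filterlim_locally_ball_norm (K := R_AbsRing) (U := C_R_NormedModule) g (g x))).
intros eps; pose proof (cond_pos eps); pose proof (Rabs_pos M).
apply (locally_norm_le_locally (K := R_AbsRing) (V := AbsRing_NormedModule R_AbsRing)).
assert (Hr : 0 < Rmin d (eps / (Rabs M + 1))) by (apply Rmin_pos; [| apply Rdiv_lt_0_compat]; lra).
exists (mkposreal _ Hr); intros t Ht.
change (Rabs (t - x) < Rmin d (eps / (Rabs M + 1))) in Ht.
unfold ball_norm; rewrite <- Cmod_norm.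
pose proof (Rmin_l d (eps / (Rabs M + 1))); pose proof (Rmin_r d (eps / (Rabs M + 1))).
pose proof (Rabs_pos (t - x)); pose proof (Rle_abs M).
apply Rle_lt_trans with (M * Rabs (t - x)); [apply Hg; lra |].
apply Rle_lt_trans with (Rabs M * (eps / (Rabs M + 1))); [nra |].
apply (Rmult_lt_reg_r (Rabs M + 1)); [lra |]; field_simplify; lra.
Qed.

Definition G_integrand (s : C) (t : R) : C := ((1 - Cexp (- (RtoC t * s))) / RtoC t)%C.

Lemma RtoC_neq_0 t : t <> 0 -> RtoC t <> 0%C.
Proof. intros Ht E; apply Ht; injection E; auto. Qed.

Lemma Cmod_G_integrand_sub_le s t : t <> 0 -> Rabs t * Cmod s <= 1/2 ->
  Cmod (G_integrand s t - s) <= 3 * Cmod s ^ 2 * Rabs t.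
Proof.
intros Ht Hts; set (w := (- (RtoC t * s))%C).
assert (Hw : Cmod w = Rabs t * Cmod s) by (unfold w; rewrite Cmod_opp, Cmod_mult, Cmod_R; auto).
replace (G_integrand s t - s)%C with (- (Cexp w - 1 - w) / RtoC t)%C
  by (unfold G_integrand, w; field; apply RtoC_neq_0; auto).
assert (0 < Rabs t) by (apply Rabs_pos_lt; auto).
rewrite Cmod_div, Cmod_opp, Cmod_R by (apply RtoC_neq_0; auto).
apply (Rmult_le_reg_r (Rabs t)); [lra |].
unfold Rdiv; rewrite Rmult_assoc, Rinv_l, Rmult_1_r by lra.
eapply Rle_trans; [apply Cmod_Cexp_sub_1_sub_le; lra |]; rewrite Hw; right; ring.
Qed.

Lemma continuous_G_integrand s t : t <> 0 ->
  continuous (T := R_UniformSpace) (U := C_R_CompleteNormedModule) (G_integrand s) t.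
Proof.
intros Ht; apply (ex_derive_continuous (K := R_AbsRing) (V := C_R_NormedModule)).
eexists; apply (is_derive_comp_RtoC (fun tau => (1 - Cexp (- (tau * s))) * / tau)%C).
apply is_C_derive_mult; [| apply is_C_derive_Cinv, RtoC_neq_0, Ht].
apply is_C_derive_minus; [apply is_C_derive_const | apply is_C_derive_Cexp_scale].
Qed.

(* At [t = 0] the integrand only has a junk value; it extends continuously by [s]. *)
Lemma ex_RInt_G_integrand s T : 0 < T ->
  ex_RInt (V := C_R_CompleteNormedModule) (G_integrand s) 0 T.
Proof.
intros HT; set (g t := if Req_EM_T t 0 then s else G_integrand s t).
apply (ex_RInt_ext (V := C_R_CompleteNormedModule) g).
{ intros x Hx; rewrite Rmin_left, Rmax_right in Hx by lra; unfold g.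
  destruct (Req_EM_T x 0); [lra | reflexivity]. }
apply (ex_RInt_continuous (V := C_R_CompleteNormedModule)); intros t Ht.
rewrite Rmin_left, Rmax_right in Ht by lra.
destruct (Req_EM_T t 0) as [-> | Ht0].
- pose proof (Cmod_ge_0 s).
  apply (continuous_of_linear_bound g 0 (/ (2 * (Cmod s + 1))) (3 * Cmod s ^ 2));
    [apply Rinv_0_lt_compat; lra |].
  intros t Hst; rewrite Rminus_0_r in *; unfold g.
  destruct (Req_EM_T 0 0) as [_ | ]; [| lra].
  destruct (Req_EM_T t 0) as [-> | Ht0].
  + replace (s - s)%C with (RtoC 0) by ring; rewrite Rabs_R0, Cmod_0; lra.
  + apply Cmod_G_integrand_sub_le; auto.
    apply Rle_trans with (/ (2 * (Cmod s + 1)) * (Cmod s + 1)); [pose proof (Rabs_pos t); nra |].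
    right; field; lra.
- apply (continuous_ext_loc _ (G_integrand s)); [| apply continuous_G_integrand, Ht0].
  apply (locally_interval _ t (Finite 0) p_infty); [simpl; lra | exact I |].
  intros y Hy _; simpl in Hy; unfold g; destruct (Req_EM_T y 0); [lra | reflexivity].
Qed.

Lemma is_RInt_Cexp_scale (c s : C) T : s <> 0%C ->
  is_RInt (V := C_R_CompleteNormedModule) (fun t => c * Cexp (- (RtoC t * s)))%C 0 T
    (c * ((1 - Cexp (- (RtoC T * s))) / s))%C.
Proof.
intros Hs.
assert (Hderiv : forall t, is_C_derive (fun w => - c * Cexp (- (w * s)) / s)%C (RtoC t)
  (c * Cexp (- (RtoC t * s)))%C).
{ intros t; refine (is_C_derive_ext _ _ _ _ _ _ _ (is_C_derive_mult _ _ _ _ _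
    (is_C_derive_mult _ _ _ _ _ (is_C_derive_const (- c) _) (is_C_derive_Cexp_scale s _))
    (is_C_derive_const (/ s) _))); [reflexivity | field; exact Hs]. }
replace (c * ((1 - Cexp (- (RtoC T * s))) / s))%C
  with (- c * Cexp (- (RtoC T * s)) / s - - c * Cexp (- (RtoC 0 * s)) / s)%C.
2: { replace (- (RtoC 0 * s))%C with (RtoC 0) by ring; rewrite Cexp_0; field; exact Hs. }
apply (is_RInt_derive (V := C_R_CompleteNormedModule)
  (fun t => - c * Cexp (- (RtoC t * s)) / s)%C); intros t _.
- exact (is_derive_comp_RtoC _ _ _ (Hderiv t)).
- apply (ex_derive_continuous (K := R_AbsRing) (V := C_R_NormedModule)); eexists.
  apply (is_derive_comp_RtoC (fun w => c * Cexp (- (w * s)))%C).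
  apply is_C_derive_mult; [apply is_C_derive_const | apply is_C_derive_Cexp_scale].
Qed.

Lemma G_integrand_sub (s z : C) t : t <> 0 ->
  (G_integrand z t - G_integrand s t = Cexp (- (RtoC t * s)) * G_integrand (z - s) t)%C.
Proof.
intros Ht; unfold G_integrand.
replace (Cexp (- (RtoC t * z))) with (Cexp (- (RtoC t * s)) * Cexp (- (RtoC t * (z - s))))%C
  by (rewrite <- Cexp_add; f_equal; ring).
field; apply RtoC_neq_0, Ht.
Qed.

Lemma Cmod_G_integrand_remainder_le (s z : C) t T : 0 <= Re s -> 0 < t <= T ->
  Cmod (z - s) * T <= 1/2 ->
  Cmod (G_integrand z t - G_integrand s t - (z - s) * Cexp (- (RtoC t * s)))
    <= 3 * T * Cmod (z - s) ^ 2.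
Proof.
intros Hs Ht Hz; rewrite G_integrand_sub by lra.
replace (Cexp (- (RtoC t * s)) * G_integrand (z - s) t - (z - s) * Cexp (- (RtoC t * s)))%C
  with (Cexp (- (RtoC t * s)) * (G_integrand (z - s) t - (z - s)))%C by ring.
rewrite Cmod_mult.
assert (HE : Cmod (Cexp (- (RtoC t * s))) <= 1).
{ apply Cmod_Cexp_le_1; rewrite re_opp, re_mult; simpl; nra. }
pose proof (Cmod_ge_0 (z - s)); pose proof (Cmod_ge_0 (Cexp (- (RtoC t * s)))).
pose proof (Cmod_G_integrand_sub_le (z - s) t ltac:(lra) ltac:(rewrite Rabs_right; nra)) as Hrem.
rewrite Rabs_right in Hrem by lra.
pose proof (Cmod_ge_0 (G_integrand (z - s) t - (z - s))).
apply Rle_trans with (Cmod (G_integrand (z - s) t - (z - s))); [nra |].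
eapply Rle_trans; [exact Hrem |]; pose proof (pow2_ge_0 (Cmod (z - s))); nra.
Qed.

(* The difference quotient of [G u] is controlled by integrating the pointwise
   remainder bound over [0, 1/u]. *)
Lemma is_C_derive_G u (s : C) : 0 < u -> 0 <= Re s -> s <> 0%C ->
  is_C_derive (G u) s ((1 - Cexp (- (RtoC (1 / u) * s))) / s)%C.
Proof.
intros Hu Hs Hs0; set (T := 1 / u).
assert (HT : 0 < T) by (unfold T; apply Rdiv_lt_0_compat; lra).
apply (is_C_derive_of_quadratic_remainder _ _ _ (1 / (2 * T)) (3 * T * T));
  [apply Rdiv_lt_0_compat; lra | nra |].
intros z Hz.
assert (Hzs : Cmod (z - s) * T <= 1/2).
{ apply (Rmult_lt_compat_r T) in Hz; [| lra].
  replace (1 / (2 * T) * T) with (1/2) in Hz by (field; lra); lra. }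
pose proof (is_RInt_minus (V := C_R_CompleteNormedModule) _ _ _ _ _ _
  (is_RInt_minus (V := C_R_CompleteNormedModule) _ _ _ _ _ _
    (RInt_correct _ _ _ (ex_RInt_G_integrand z T HT))
    (RInt_correct _ _ _ (ex_RInt_G_integrand s T HT)))
  (is_RInt_Cexp_scale (z - s) s T Hs0)) as Hint.
set (rem t := if Req_EM_T t 0 then RtoC 0
  else (G_integrand z t - G_integrand s t - (z - s) * Cexp (- (RtoC t * s)))%C).
apply (is_RInt_ext (V := C_R_CompleteNormedModule) _ rem) in Hint.
2: { intros x Hx; rewrite Rmin_left, Rmax_right in Hx by lra; unfold rem.
     destruct (Req_EM_T x 0); [lra | reflexivity]. }
apply (norm_RInt_le_const (V := C_R_CompleteNormedModule) _ _ _ _ (3 * T * Cmod (z - s) ^ 2))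
  in Hint; [| lra |].
- rewrite <- Cmod_norm in Hint; eapply Rle_trans; [exact Hint | right; ring].
- intros t Ht; rewrite <- Cmod_norm; unfold rem; destruct (Req_EM_T t 0).
  + rewrite Cmod_0; pose proof (pow2_ge_0 (Cmod (z - s))); nra.
  + apply Cmod_G_integrand_remainder_le; auto; lra.
Qed.

Lemma sdG_eq u (s : C) : 0 < u -> 0 <= Re s -> s <> 0%C ->
  sdG u s = (1 - Cexp (- (s / RtoC u)))%C.
Proof.
intros Hu Hs Hs0; unfold sdG.
pose proof (is_C_derive_G u s Hu Hs Hs0) as HG.
rewrite (CDerive_unique (fun z => G u z) s _ HG).
replace (RtoC (1 / u) * s)%C with (s / RtoC u)%C
  by (unfold Rdiv; rewrite Rmult_1_l, RtoC_inv by lra; unfold Cdiv; ring).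
field; exact Hs0.
Qed.

(** * Derivatives in [u] *)

(* A list [L] read at weight [N] encodes the polynomial
   [sum_{(c, k) in L} c s^k w^(N + k)]. *)
Fixpoint wpoly (N : nat) (s w : C) (L : list (R * nat)) : C :=
  match L with
  | nil => RtoC 0
  | (c, k) :: L' => (RtoC c * s ^ k * w ^ (N + k) + wpoly N s w L')%C
  end.

Fixpoint wpoly_deriv (N : nat) (L : list (R * nat)) : list (R * nat) :=
  match L with
  | nil => nil
  | (c, k) :: L' => (c, S k) :: (- c * INR (N + k), k) :: wpoly_deriv N L'
  end.

Definition exp_wpoly (N : nat) (L : list (R * nat)) (s tau : C) : C :=
  (Cexp (- (s / tau)) * wpoly N s (/ tau) L)%C.

Lemma is_C_derive_Cinv_pow j (t0 : C) : t0 <> 0%C ->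
  is_C_derive (fun t => (/ t) ^ j)%C t0 (- RtoC (INR j) * (/ t0) ^ S j)%C.
Proof.
intros Ht0; induction j as [| j IH].
- refine (is_C_derive_ext _ _ _ _ _ _ _ (is_C_derive_const 1 t0)); [reflexivity | simpl; ring].
- refine (is_C_derive_ext _ _ _ _ _ _ _ (is_C_derive_mult _ _ _ _ _ (is_C_derive_Cinv t0 Ht0) IH));
    [reflexivity |].
  rewrite S_INR, RtoC_plus; simpl; field; exact Ht0.
Qed.

Lemma is_C_derive_Cexp_inv (s t0 : C) : t0 <> 0%C ->
  is_C_derive (fun t => Cexp (- (s / t)))%C t0 (s * (/ t0) ^ 2 * Cexp (- (s / t0)))%C.
Proof.
intros Ht0.
refine (is_C_derive_ext _ _ _ _ _ _ _ (is_C_derive_comp Cexp (fun t => - (s / t))%C t0 _ _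
  (is_C_derive_Cexp _) (is_C_derive_opp _ _ _ (is_C_derive_mult (fun _ => s) Cinv t0 _ _
    (is_C_derive_const s t0) (is_C_derive_Cinv t0 Ht0))))); [reflexivity | simpl; field; exact Ht0].
Qed.

Lemma is_C_derive_exp_wpoly N L (s t0 : C) : t0 <> 0%C ->
  is_C_derive (exp_wpoly N L s) t0 (exp_wpoly (S N) (wpoly_deriv N L) s t0).
Proof.
intros Ht0; unfold exp_wpoly; induction L as [| [c k] L IH]; simpl.
- refine (is_C_derive_ext _ _ _ _ _ _ _ (is_C_derive_const 0 t0)); [intros w |]; simpl; ring.
- refine (is_C_derive_ext _ _ _ _ _ _ _ (is_C_derive_plus _ _ _ _ _
    (is_C_derive_mult _ _ _ _ _ (is_C_derive_Cexp_inv s t0 Ht0)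
      (is_C_derive_mult _ _ _ _ _ (is_C_derive_const (RtoC c * s ^ k) t0)
        (is_C_derive_Cinv_pow (N + k) t0 Ht0))) IH)); [intros w; simpl; ring |].
  rewrite RtoC_mult, RtoC_opp, <- plus_n_Sm; simpl; ring.
Qed.

Fixpoint sdG_coeffs (n : nat) : list (R * nat) :=
  match n with
  | O => (-1, 1%nat) :: nil
  | S m => wpoly_deriv (S m) (sdG_coeffs m)
  end.

Lemma DerC_sdG n (s : C) y : 0 <= Re s -> s <> 0%C -> 0 < y ->
  DerC (S n) (fun v => sdG v s) y = exp_wpoly (S n) (sdG_coeffs n) s (RtoC y).
Proof.
intros Hs Hs0; revert y; induction n as [| n IH]; intros y Hy.
- apply (DerC_S_eq 0 _ (fun tau => 1 - Cexp (- (s / tau)))%C); auto.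
  + intros x Hx; apply sdG_eq; auto.
  + refine (is_C_derive_ext _ _ _ _ _ _ _ (is_C_derive_minus _ _ _ _ _
      (is_C_derive_const 1 _) (is_C_derive_Cexp_inv s _ (RtoC_neq_0 y (Rgt_not_eq _ _ Hy)))));
      [reflexivity | unfold exp_wpoly; simpl; ring].
- apply (DerC_S_eq (S n) _ (exp_wpoly (S n) (sdG_coeffs n) s)); auto.
  apply is_C_derive_exp_wpoly, RtoC_neq_0; lra.
Qed.

Lemma Forall_wpoly_deriv N L : List.Forall (fun m => (snd m <= N)%nat) L ->
  List.Forall (fun m => (snd m <= S N)%nat) (wpoly_deriv N L).
Proof.
induction 1 as [| [c k] L Hk _ IH]; simpl in *;
  [apply Forall_nil | repeat apply Forall_cons; simpl; auto; lia].
Qed.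

Lemma sdG_coeffs_index_le n : List.Forall (fun m => (snd m <= S n)%nat) (sdG_coeffs n).
Proof.
induction n as [| n IH]; simpl.
- apply Forall_cons; [simpl; lia | apply Forall_nil].
- apply Forall_wpoly_deriv, IH.
Qed.

Fixpoint coeff_norm (L : list (R * nat)) : R :=
  match L with
  | nil => 0
  | (c, _) :: L' => Rabs c + coeff_norm L'
  end.

Lemma coeff_norm_ge_0 L : 0 <= coeff_norm L.
Proof. induction L as [| [c k] L IH]; simpl; [lra | pose proof (Rabs_pos c); lra]. Qed.

Lemma pow_mul_inv_pow_le a u k N : (k <= N)%nat -> 0 < u <= a ->
  a ^ k * (/ u) ^ (N + k) <= a ^ N * (/ u) ^ (2 * N).
Proof.
intros HkN Hua; destruct (Nat.le_exists_sub k N HkN) as [m [-> _]].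
replace (2 * (m + k))%nat with (m + k + k + m)%nat by lia.
rewrite !pow_add.
assert (Hau : 1 <= a * / u) by (apply (Rmult_le_reg_r u); [lra |]; field_simplify; lra).
pose proof (pow_R1_Rle _ m Hau); rewrite Rpow_mult_distr in *.
assert (0 <= a ^ k * ((/ u) ^ m * (/ u) ^ k * (/ u) ^ k))
  by (pose proof (Rinv_0_lt_compat u ltac:(lra)); repeat apply Rmult_le_pos; apply pow_le; lra).
nra.
Qed.

Lemma Cmod_wpoly_le N L (s : C) u :
  List.Forall (fun m => (snd m <= N)%nat) L -> 0 < u <= Cmod s ->
  Cmod (wpoly N s (/ RtoC u) L) <= coeff_norm L * (Cmod s ^ N * (/ u) ^ (2 * N)).
Proof.
intros HL Hu; induction HL as [| [c k] L Hk _ IH]; simpl in *; [rewrite Cmod_0; lra |].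
eapply Rle_trans; [apply Cmod_triangle |]; rewrite Rmult_plus_distr_r.
apply Rplus_le_compat; [| exact IH].
rewrite !Cmod_mult, !Cmod_pow, Cmod_R, Cmod_inv, Cmod_R, (Rabs_right u), Rmult_assoc
  by (try apply RtoC_neq_0; lra).
apply Rmult_le_compat_l; [apply Rabs_pos | apply pow_mul_inv_pow_le; auto].
Qed.

Lemma Cmod_Cexp_div_le_1 (s : C) u : 0 <= Re s -> 0 < u -> Cmod (Cexp (- (s / RtoC u))) <= 1.
Proof.
intros Hs Hu; apply Cmod_Cexp_le_1.
rewrite re_opp; unfold Cdiv; rewrite <- RtoC_inv, re_mult by lra; simpl.
pose proof (Rinv_0_lt_compat u Hu); nra.
Qed.

Lemma Cmod_exp_wpoly_le N L (s : C) u : List.Forall (fun m => (snd m <= N)%nat) L ->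
  0 <= Re s -> 0 < u <= Cmod s ->
  Cmod (exp_wpoly N L s (RtoC u)) <= coeff_norm L * Cmod s ^ N / u ^ (2 * N).
Proof.
intros HL Hs Hu; unfold exp_wpoly; rewrite Cmod_mult.
pose proof (Cmod_Cexp_div_le_1 s u Hs ltac:(lra)).
pose proof (Cmod_wpoly_le N L s u HL Hu).
pose proof (Cmod_ge_0 (Cexp (- (s / RtoC u)))).
pose proof (Cmod_ge_0 (wpoly N s (/ RtoC u) L)).
unfold Rdiv; rewrite <- pow_inv, Rmult_assoc; nra.
Qed.

Theorem lemma10 :
  forall nu : nat, exists K : R, 0 < K /\
    forall (u : R) (s : C),
      Re s = 1 -> 1 <= u -> Cmod s > u ->
      Cmod (DerC nu (fun v => sdG v s) u) <= K * (Cmod s) ^ nu / u ^ (2 * nu).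
Proof.
intros nu.
assert (Hs0 : forall s : C, Re s = 1 -> s <> 0%C) by (intros s Hs ->; simpl in Hs; lra).
destruct nu as [| n].
- exists 2; split; [lra |]; intros u s Hs Hu Hsu; simpl.
  rewrite sdG_eq by (auto; lra).
  eapply Rle_trans; [apply Cmod_triangle |]; rewrite Cmod_opp, Cmod_1.
  pose proof (Cmod_Cexp_div_le_1 s u ltac:(lra) ltac:(lra)); lra.
- pose proof (coeff_norm_ge_0 (sdG_coeffs n)).
  exists (coeff_norm (sdG_coeffs n) + 1); split; [lra |]; intros u s Hs Hu Hsu.
  rewrite DerC_sdG by (auto; lra).
  eapply Rle_trans; [apply Cmod_exp_wpoly_le; auto using sdG_coeffs_index_le; lra |].
  apply Rmult_le_compat_r; [left; apply Rinv_0_lt_compat, pow_lt; lra |].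
  apply Rmult_le_compat_r; [apply pow_le, Cmod_ge_0 | lra].
Qed.
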